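(* Let $r,s$ be positive integers, $d=rs$, $\lambda>0$ and $0<\delta\le2/5$. Let $\theta^0\in\mathbb R^d$ be the vector with all entries $1/2$. For $k\in[s]$ let $I_k=\{(k-1)r+1,\dots,kr\}$ and let $\theta^k\in\mathbb R^d$ have entries $\theta^k_i=1/2+\delta$ for $i\in I_k$ and $\theta^k_i=1/2$ otherwise. Let $w$ be drawn uniformly at random from $\{\theta^k\}_{k\in[s]}$. Then \[ \chi^2\big(\mathbb G(w)\,\|\,\mathbb G(\theta^0)\big)\le\frac{2\lambda\delta^2r}{s}\quad\text{provided }\lambda\delta^2r\le2/5, \] and \[ \chi^2\big(\mathbb V(w)\,\|\,\mathbb V(\theta^0)\big)\le\frac{8\lambda\delta^2r}{s}\quad\text{provided }\lambda\delta^2r\le1/10. \]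
   Context: For a vector $U\in\mathbb R^d$, $\mathbb G(U)$ denotes the law of the following observations: counts $\kappa_1,\dots,\kappa_d$ i.i.d. $\mathrm{Poi}(\lambda)$, and, conditionally on them, for each $i$, $\kappa_i$ independent samples from $\mathcal N(U_i,1)$ (all independent). $\mathbb V(U)$ (for $U\in[0,1]^d$) is defined identically with $\mathrm{Ber}(U_i)$ samples in place of $\mathcal N(U_i,1)$. For a random vector $w$, $\mathbb G(w)$ (resp. $\mathbb V(w)$) denotes the mixture obtained by first drawing $w$ and then observations from $\mathbb G(w)$ (resp. $\mathbb V(w)$). $\chi^2$ denotes the chi-square divergence. *)

From HB Require Import structures.
From mathcomp Require Import all_boot all_order all_algebra.
From mathcomp Require Import all_classical all_reals all_analysis.
Set Implicit Arguments. Unset Strict Implicit. Unset Printing Implicit Defensive.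
Import Order.TTheory GRing.Theory Num.Theory.
Local Open Scope ring_scope.
Local Open Scope ereal_scope.

(* An observation of the Poissonized model in dimension d: for each
   coordinate i, the (finite, random-length) list of samples seen at i.
   The observation space is  prod_i (disjoint union_n X^n).  *)
Definition obs (X : Type) (d : nat) := 'I_d -> seq X.

Section Model.
Variables (R : realType) (X : Type).

(* J is "integration of one sample" w.r.t. the base reference measure on X
   (Lebesgue on R for Gaussian samples, counting measure on bool for
   Bernoulli samples). *)
Variable J : (X -> \bar R) -> \bar R.

Fixpoint intn (n : nat) (g : seq X -> \bar R) : \bar R :=
  match n with
  | 0%N => g [::]
  | n'.+1 => J (fun x => intn n' (fun t => g (x :: t)))
  end.

(* integral over the disjoint union of the X^n (reference measure
   sum_n (base)^n) *)
Definition intseq (g : seq X -> \bar R) : \bar R :=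
  \sum_(n <oo) intn n g.

Fixpoint intobs_aux d (l : seq 'I_d) (g : obs X d -> \bar R) : \bar R :=
  match l with
  | [::] => g (fun _ => [::])
  | i :: l' => intseq (fun t => intobs_aux l'
                 (fun o => g (fun j => if j == i then t else o j)))
  end.

Definition intobs d (g : obs X d -> \bar R) : \bar R :=
  intobs_aux (enum 'I_d) g.

Variable f : R -> X -> R.

(* density of the law (G or V)(U) on obs X d, w.r.t. the reference measure:
   Poisson(lam) weight of each count times the product of sample densities *)
Definition law_dens (lam : R) d (U : 'I_d -> R) (o : obs X d) : R :=
  (\prod_(i < d)
     (expR (- lam) * lam ^+ size (o i) / (size (o i))`!%:R *
      \prod_(x <- o i) f (U i) x))%R.

(* chi-square divergence chi^2(P || Q) = \int p^2/q dmu - 1, for P, Q with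
   densities p, q w.r.t. the reference measure (q > 0 everywhere here) *)
Definition chi2 d (p q : obs X d -> R) : \bar R :=
  intobs (fun o => ((p o ^+ 2) / q o)%:E) - 1.
End Model.

Definition gauss_pdf (R : realType) (m x : R) : R :=
  (expR (- ((x - m) ^+ 2) / 2) / Num.sqrt (2 * pi))%R.
Definition leb_int (R : realType) (g : R -> \bar R) : \bar R :=
  \int[@lebesgue_measure R]_(x in setT) g x.

Definition bern_pmf (R : realType) (p : R) (b : bool) : R :=
  if b then p else (1 - p)%R.
Definition bool_int (R : realType) (g : bool -> \bar R) : \bar R :=
  g false + g true.

Definition G_dens (R : realType) (lam : R) d (U : 'I_d -> R) : obs R d -> R :=
  law_dens (@gauss_pdf R) lam U.
Definition V_dens (R : realType) (lam : R) d (U : 'I_d -> R) : obs bool d -> R :=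
  law_dens (@bern_pmf R) lam U.

(* theta^0 and theta^k (k 0-based; I_k = {k r, ..., k r + r - 1} 0-based) *)
Definition theta0 (R : realType) d : 'I_d -> R := fun _ => (1 / 2)%R.
Definition thetak (R : realType) (r s : nat) (delta : R) (k : 'I_s)
    : 'I_(r * s) -> R :=
  fun i => if (i %/ r == k)%N then (1 / 2 + delta)%R else (1 / 2)%R.

Definition unif_mix (R : realType) (X : Type) (s d : nat)
    (dens : ('I_d -> R) -> obs X d -> R) (th : 'I_s -> 'I_d -> R)
    : obs X d -> R :=
  fun o => (s%:R^-1 * \sum_(k < s) dens (th k) o)%R.

From HB Require Import structures.
From mathcomp Require Import all_boot all_order all_algebra.
From mathcomp Require Import all_classical all_reals all_analysis.
From mathcomp Require Import measurable_realfun normal_distribution.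
From mathcomp.algebra_tactics Require Import ring lra.
Set Implicit Arguments.
Unset Strict Implicit.
Unset Printing Implicit Defensive.
Import Order.TTheory GRing.Theory Num.Theory.
Local Open Scope ring_scope.

(* Write the mixture density as s^-1 \sum_k p_k. Then chi^2 + 1 is
   s^-2 \sum_(k, k') \int p_k p_k' / p_0, and every such integral factorises
   over the coordinates. In coordinate i the sample count is Poisson(lam) and
   the samples are i.i.d., so the coordinate contributes
   \sum_n e^-lam lam^n c^n / n! = exp (lam (c - 1)), where
   c = \int f_a f_b / f_(1/2) equals exp ((a - 1/2) (b - 1/2)) for unit
   Gaussians and 1 + 4 (a - 1/2) (b - 1/2) for Bernoulli samples. Since
   theta^k and theta^k' deviate from 1/2 on disjoint blocks when k != k', only
   the s diagonal pairs contribute, each by exp (lam r (c(delta^2) - 1)); hence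
   chi^2 = (exp (lam r (c(delta^2) - 1)) - 1) / s, and convexity of exp bounds
   the numerator under the stated smallness conditions. *)

Section ExpBounds.
Variable R : realType.

Lemma expR_chord (x a : R) : 0 <= x -> x <= a -> 0 < a ->
  expR x <= 1 + x * ((expR a - 1) / a).
Proof.
move=> x0 xa a0.
have t0 : 0 <= x / a by rewrite divr_ge0 // ltW.
have t1 : x / a <= 1 by rewrite ler_pdivrMr // mul1r.
have := convex_expR (@Itv01 R (x / a) t0 t1) a 0.
rewrite !convRE /= expR0 mulr0 addr0 divfK ?gt_eqF // mulr1 => /le_trans; apply.
rewrite (_ : _ + _ = 1 + x * ((expR a - 1) / a)) //.
by rewrite /unstable.onem; field; rewrite gt_eqF.
Qed.

Lemma expR_le_inv_sq (a : R) : a < 2 -> expR a <= ((1 - a / 2) ^+ 2)^-1.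
Proof.
move=> a2; have pos : 0 < 1 - a / 2 by lra.
have half : expR (a / 2) <= (1 - a / 2)^-1.
  rewrite -[expR _]invrK -expRN lef_pV2 ?posrE ?invr_gt0 ?expR_gt0 //.
  by have := expR_ge1Dx (- (a / 2)); lra.
have -> : expR a = expR (a / 2) ^+ 2 by rewrite -expRM_natl; congr expR; field.
by rewrite -exprVn !expr2 ler_pM ?expR_ge0.
Qed.

Lemma expR_sub1_le (x a : R) : 0 <= x -> x <= a -> 0 < a -> a < 2 ->
  expR x - 1 <= x * ((1 - a / 4) / (1 - a / 2) ^+ 2).
Proof.
move=> x0 xa a0 a2.
have chord := expR_chord x0 xa a0.
have slope : (expR a - 1) / a <= (1 - a / 4) / (1 - a / 2) ^+ 2.
  rewrite ler_pdivrMr // (_ : _ * a = ((1 - a / 2) ^+ 2)^-1 - 1).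
    by rewrite lerD2r expR_le_inv_sq.
  by field; rewrite gt_eqF // subr_gt0.
have := ler_wpM2l x0 slope; lra.
Qed.

Lemma expR_expR_sub1_le (lam u rr : R) : 0 <= lam -> 0 <= rr -> 0 <= u ->
  u <= 4 / 25 -> lam * u * rr <= 2 / 5 ->
  expR (lam * rr * (expR u - 1)) - 1 <= 2 * lam * u * rr.
Proof.
move=> lam0 rr0 u0 u1 small.
have Eu : expR u - 1 <= u * (600 / 529).
  have K : (1 - 4 / 25 / 4) / (1 - 4 / 25 / 2) ^+ 2 = 600 / 529 :> R by field.
  by rewrite -K expR_sub1_le //; lra.
set y := lam * rr * (expR u - 1).
have y0 : 0 <= y.
  by rewrite !mulr_ge0 // subr_ge0; have := expR_ge1Dx u; lra.
have yL : y <= lam * u * rr * (600 / 529).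
  rewrite (_ : _ * (600 / 529) = lam * rr * (u * (600 / 529))); last by ring.
  by rewrite ler_wpM2l ?mulr_ge0.
have Ey : expR y - 1 <= y * (14 / 9).
  have K : (1 - 1 / 2 / 4) / (1 - 1 / 2 / 2) ^+ 2 = 14 / 9 :> R by field.
  by rewrite -K expR_sub1_le //; lra.
rewrite (_ : 2 * lam * u * rr = 2 * (lam * u * rr)); last by ring.
lra.
Qed.

Lemma expR_mul4_sub1_le (lam u rr : R) : 0 <= lam -> 0 <= rr -> 0 <= u ->
  lam * u * rr <= 1 / 10 ->
  expR (lam * rr * (4 * u)) - 1 <= 8 * lam * u * rr.
Proof.
move=> lam0 rr0 u0 small.
set y := lam * rr * (4 * u).
have y0 : 0 <= y by rewrite !mulr_ge0.
have yL : y = 4 * (lam * u * rr) by rewrite /y; ring.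
have Ey : expR y - 1 <= y * (45 / 32).
  have K : (1 - 2 / 5 / 4) / (1 - 2 / 5 / 2) ^+ 2 = 45 / 32 :> R by field.
  by rewrite -K expR_sub1_le //; lra.
rewrite (_ : 8 * lam * u * rr = 2 * y); last by rewrite /y; ring.
lra.
Qed.

End ExpBounds.

Section Blocks.
Variables (R : realType) (r s : nat) (delta : R).
Hypothesis r_gt0 : (0 < r)%N.

Local Notation overlap k k' i :=
  ((thetak delta k i - 1 / 2) * (thetak delta k' i - 1 / 2)).

Lemma sum_block_indicator (k : 'I_s) (x : R) :
  \sum_(i < r * s) (if (i %/ r == k)%N then x else 0) = r%:R * x.
Proof.
rewrite -(big_mkord xpredT (fun i => if (i %/ r == k)%N then x else 0)) /=.
rewrite mulnC big_nat_mul (eq_bigr (fun b => if b == val k then x *+ r else 0)).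
  by rewrite big_mkord -big_mkcond (big_pred1 k) ?mulr_natl.
move=> b _.
rewrite (eq_big_nat _ _ (F2 := fun _ => if b == val k then x else 0)).
  by rewrite sumr_const_nat mulSn addnK; case: eqP => _; rewrite ?mul0rn.
move=> j /andP[bj jb]; suff -> : (j %/ r)%N = b by [].
by apply/eqP; rewrite eqn_leq -ltnS ltn_divLR // leq_divRL // jb bj.
Qed.

Lemma sum_thetak_overlap (g : R -> R) (k k' : 'I_s) : g 0 = 0 ->
  \sum_(i < r * s) g (overlap k k' i)
  = if k == k' then r%:R * g (delta ^+ 2) else 0.
Proof.
move=> g0; rewrite /thetak; case: eqP => [<-|neq_kk'].
  rewrite -(sum_block_indicator k); apply: eq_bigr => i _.
  by case: ifP => _; rewrite ?subrr ?mulr0 // addrAC subrr add0r expr2.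
rewrite big1 // => i _; case: eqP => [ik|_]; last by rewrite subrr mul0r.
case: eqP => [ik'|_]; last by rewrite subrr mulr0.
by case: neq_kk'; apply: ord_inj; rewrite -ik -ik'.
Qed.

Lemma sum_pairs_thetak (c : R -> R) (lam : R) : (0 < s)%N -> c 0 = 1 ->
  s%:R^-2 * \sum_(p : 'I_s * 'I_s) \prod_(i < r * s)
    expR (lam * (c (overlap p.1 p.2 i) - 1))
  = 1 + (expR (lam * r%:R * (c (delta ^+ 2) - 1)) - 1) / s%:R.
Proof.
move=> s_gt0 c0; set e := expR (lam * r%:R * (c (delta ^+ 2) - 1)).
have term (p : 'I_s * 'I_s) : \prod_(i < r * s)
    expR (lam * (c (overlap p.1 p.2 i) - 1))
    = 1 + (if p.1 == p.2 then e - 1 else 0).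
  rewrite -expR_sum (@sum_thetak_overlap (fun u => lam * (c u - 1))) /=;
    last by rewrite c0 subrr mulr0.
  case: eqP => _; rewrite ?expR0 ?addr0 //.
  by rewrite [1 + _]addrC subrK /e; congr expR; ring.
under eq_bigr do rewrite term.
rewrite big_split /= sumr_const card_prod card_ord.
rewrite -(pair_bigA _ (fun k k' => if k == k' then e - 1 else 0)) /=.
have diag (k : 'I_s) : \sum_(k' < s) (if k == k' then e - 1 else 0) = e - 1.
  by rewrite -big_mkcond /= (big_pred1 k) // => k'; rewrite eq_sym.
under eq_bigr do rewrite diag.
rewrite sumr_const card_ord -[(e - 1) *+ s]mulr_natr natrM.
have s_neq0 : s%:R != 0 :> R by rewrite pnatr_eq0 -lt0n.
by field.
Qed.

End Blocks.

Definition poisson_weight (R : realType) (lam : R) (n : nat) : R :=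
  expR (- lam) * lam ^+ n / n`!%:R.

Lemma poisson_weight_gt0 (R : realType) (lam : R) n :
  0 < lam -> 0 < poisson_weight lam n.
Proof.
move=> lam0.
by rewrite divr_gt0 ?ltr0n ?fact_gt0 // mulr_gt0 ?expR_gt0 // exprn_gt0.
Qed.

Lemma series_expR (R : realType) (x : R) :
  (\sum_(n <oo) (x ^+ n / n`!%:R)%:E = (expR x)%:E)%E.
Proof.
rewrite -EFin_lim; last exact: is_cvg_series_exp_coeff.
by apply/congr_lim/funext => n /=; rewrite -sumEFin.
Qed.

Section ProductIntegrals.
Variables (R : realType) (X : Type) (J : (X -> \bar R) -> \bar R).

(* [integrates phi c]: [phi] is a nonnegative integrand of the class on which
   [J] is known to be linear (e.g. measurable functions), with [J phi = c]. *)
Variable integrates : (X -> R) -> R -> Prop.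
Hypothesis integrates_ge0 : forall phi c,
  integrates phi c -> (forall x, 0 <= phi x) /\ 0 <= c.
Hypothesis J_sum : forall (I : finType) (a : I -> R) phi c,
  (forall j, integrates (phi j) (c j)) -> (forall j, 0 <= a j) ->
  J (fun x => (\sum_j a j * phi j x)%:E) = (\sum_j a j * c j)%:E.

Section FixedFamily.
Variables (I : finType) (phi : I -> X -> R) (c : I -> R).
Hypothesis phi_c : forall j, integrates (phi j) (c j).

Let phi_ge0 j x : 0 <= phi j x. Proof. by case: (integrates_ge0 (phi_c j)). Qed.
Let c_ge0 j : 0 <= c j. Proof. by case: (integrates_ge0 (phi_c j)). Qed.

Lemma intn_sum_prod n (a : I -> nat -> R) : (forall j m, 0 <= a j m) ->
  intn J n (fun t => (\sum_j a j (size t) * \prod_(x <- t) phi j x)%:E) =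
  (\sum_j a j n * c j ^+ n)%:E.
Proof.
elim: n a => [|n IH] a a_ge0 /=.
  by congr EFin; apply: eq_bigr => j _; rewrite big_nil expr0.
have inner x : intn J n (fun t =>
    (\sum_j a j (size (x :: t)) * \prod_(y <- x :: t) phi j y)%:E)
  = (\sum_j (a j n.+1 * c j ^+ n) * phi j x)%:E.
  under eq_fun do under eq_bigr do rewrite big_cons mulrA.
  rewrite (IH (fun j m => a j m.+1 * phi j x)) => [|j m]; last exact: mulr_ge0.
  by congr EFin; apply: eq_bigr => j _; rewrite mulrAC.
under eq_fun do rewrite inner.
rewrite (J_sum phi_c) => [|j]; last by rewrite mulr_ge0 ?exprn_ge0.
by congr EFin; apply: eq_bigr => j _; rewrite exprSr mulrA.
Qed.

Lemma intseq_sum_poisson (lam : R) (a : I -> R) :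
  0 <= lam -> (forall j, 0 <= a j) ->
  intseq J (fun t => (\sum_j a j *
    (poisson_weight lam (size t) * \prod_(x <- t) phi j x))%:E)
  = (\sum_j a j * expR (lam * (c j - 1)))%:E.
Proof.
move=> lam0 a_ge0; rewrite /intseq.
have term n : intn J n (fun t => (\sum_j a j *
      (poisson_weight lam (size t) * \prod_(x <- t) phi j x))%:E)
    = (\sum_j (a j * expR (- lam))%:E * ((lam * c j) ^+ n / n`!%:R)%:E)%E.
  under eq_fun do under eq_bigr do rewrite mulrA.
  rewrite (@intn_sum_prod n (fun j m => a j * poisson_weight lam m)) => [|j m];
    last first.
    by rewrite mulr_ge0 ?divr_ge0 ?mulr_ge0 ?expR_ge0 ?exprn_ge0.
  rewrite -sumEFin; apply: eq_bigr => j _.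
  by rewrite -EFinM /poisson_weight exprMn; congr EFin; ring.
have coef_ge0 j n : 0 <= (lam * c j) ^+ n / n`!%:R.
  by rewrite divr_ge0 ?exprn_ge0 ?mulr_ge0.
rewrite (eq_eseriesr (fun n _ => term n)) nneseries_sum => [|j n _]; last first.
  by rewrite -EFinM lee_fin mulr_ge0 ?coef_ge0 // mulr_ge0 ?a_ge0 ?expR_ge0.
rewrite -sumEFin; apply: eq_bigr => j _.
rewrite nneseriesZl => [|n _]; last by rewrite lee_fin.
by rewrite series_expR -EFinM -mulrA -expRD; congr (EFin (_ * expR _)); ring.
Qed.

End FixedFamily.

Section ObservationIntegrals.
Variables (I : finType) (d : nat).
Variables (H : I -> 'I_d -> seq X -> R) (S : I -> 'I_d -> R).
Hypotheses (H_ge0 : forall j i t, 0 <= H j i t).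
Hypotheses (S_ge0 : forall j i, 0 <= S j i).
Hypothesis intseq_H : forall i (a : I -> R), (forall j, 0 <= a j) ->
  intseq J (fun t => (\sum_j a j * H j i t)%:E) = (\sum_j a j * S j i)%:E.

Lemma intobs_aux_sum_prod (l : seq 'I_d) (b : I -> R) :
  uniq l -> (forall j, 0 <= b j) ->
  intobs_aux J l (fun o => (\sum_j b j * \prod_(i <- l) H j i (o i))%:E)
  = (\sum_j b j * \prod_(i <- l) S j i)%:E.
Proof.
elim: l b => [|i l IH] b /=.
  by move=> _ _; congr EFin; apply: eq_bigr => j _; rewrite !big_nil.
move=> /andP[il ul] b_ge0.
have inner t : intobs_aux J l (fun o => (\sum_j b j * \prod_(i' <- i :: l)
      H j i' ((fun i0 => if i0 == i then t else o i0) i'))%:E)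
    = (\sum_j (b j * \prod_(i' <- l) S j i') * H j i t)%:E.
  have off_i o j : \prod_(i' <- l) H j i' (if i' == i then t else o i')
                   = \prod_(i' <- l) H j i' (o i').
    by apply: eq_big_seq => i' i'l; case: eqP => // ii'; rewrite -ii' i'l in il.
  under eq_fun do under eq_bigr do rewrite big_cons eqxx off_i mulrA.
  rewrite IH // => [|j]; last exact: mulr_ge0.
  by congr EFin; apply: eq_bigr => j _; rewrite mulrAC.
under eq_fun do rewrite inner.
rewrite intseq_H => [|j]; last by rewrite mulr_ge0 ?prodr_ge0.
by congr EFin; apply: eq_bigr => j _; rewrite big_cons mulrAC mulrA.
Qed.

Lemma intobs_sum_prod (b : I -> R) : (forall j, 0 <= b j) ->
  intobs J (fun o => (\sum_j b j * \prod_(i < d) H j i (o i))%:E)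
  = (\sum_j b j * \prod_(i < d) S j i)%:E.
Proof.
have enumE (F : 'I_d -> R) : \prod_(i < d) F i = \prod_(i <- enum 'I_d) F i.
  by rewrite big_enum.
under eq_fun do under eq_bigr do rewrite enumE.
under eq_bigr do rewrite enumE.
exact/intobs_aux_sum_prod/enum_uniq.
Qed.

End ObservationIntegrals.

Lemma law_densE (f : R -> X -> R) (lam : R) d
    (U : 'I_d -> R) (o : obs X d) :
  law_dens f lam U o = \prod_(i < d)
    (poisson_weight lam (size (o i)) * \prod_(x <- o i) f (U i) x).
Proof. by []. Qed.

Section Mixture.
Variables (f : R -> X -> R) (lam : R) (s d : nat).
Variables (th : 'I_s -> 'I_d -> R) (U0 : 'I_d -> R).
Hypotheses (lam_gt0 : 0 < lam) (f_U0_gt0 : forall i x, 0 < f (U0 i) x).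

Local Notation ratio k k' i x := (f (th k i) x * f (th k' i) x / f (U0 i) x).
Local Notation seq_dens m t :=
  (poisson_weight lam (size t) * \prod_(x <- t) f m x).

Lemma unif_mix_sq_div o :
  unif_mix (@law_dens R X f lam d) th o ^+ 2 / law_dens f lam U0 o
  = \sum_(p : 'I_s * 'I_s) s%:R^-2 * \prod_(i < d)
      (poisson_weight lam (size (o i)) * \prod_(x <- o i) ratio p.1 p.2 i x).
Proof.
have coord k k' i t :
    poisson_weight lam (size t) * \prod_(x <- t) ratio k k' i x
    = seq_dens (th k i) t * seq_dens (th k' i) t / seq_dens (U0 i) t.
  have w_neq0 : poisson_weight lam (size t) != 0.
    by rewrite gt_eqF ?poisson_weight_gt0.
  have f_neq0 : \prod_(x <- t) f (U0 i) x != 0 by rewrite gt_eqF ?prodr_gt0.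
  by rewrite big_split prodfV big_split /=; field; rewrite w_neq0 f_neq0.
under eq_bigr do under eq_bigr do rewrite coord.
rewrite -mulr_sumr -(pair_bigA _ (fun k k' => \prod_(i < d)
  (seq_dens (th k i) (o i) * seq_dens (th k' i) (o i)
   / seq_dens (U0 i) (o i)))) /=.
under eq_bigr do under eq_bigr do rewrite big_split big_split prodfV /=.
under eq_bigr do rewrite -mulr_suml.
under eq_bigr do rewrite -mulr_sumr.
rewrite -!mulr_suml /unif_mix law_densE.
rewrite (eq_bigr _ (fun k _ => law_densE f lam (th k) o)).
by rewrite exprMn exprVn -expr2 -mulrA.
Qed.

Variable c : 'I_s -> 'I_s -> 'I_d -> R.
Hypothesis ratio_c :
  forall k k' i, integrates (fun x => ratio k k' i x) (c k k' i).

Lemma chi2_unif_mix :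
  chi2 J (unif_mix (@law_dens R X f lam d) th) (law_dens f lam U0)
  = ((s%:R^-2 * \sum_(p : 'I_s * 'I_s)
        \prod_(i < d) expR (lam * (c p.1 p.2 i - 1)))%:E - 1)%E.
Proof.
rewrite /chi2; under eq_fun do rewrite unif_mix_sq_div.
have ratio_ge0 p i x : 0 <= ratio p.1 p.2 i x.
  by case: (integrates_ge0 (ratio_c p.1 p.2 i)).
rewrite (intobs_sum_prod (H := fun p i t =>
    poisson_weight lam (size t) * \prod_(x <- t) ratio p.1 p.2 i x)
  (S := fun p i => expR (lam * (c p.1 p.2 i - 1)))) ?mulr_sumr //
  => [p i t|i a a_ge0].
- by rewrite mulr_ge0 ?prodr_ge0 // ltW ?poisson_weight_gt0.
- by apply: intseq_sum_poisson => //; exact: ltW.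
Qed.

End Mixture.

Lemma chi2_unif_mix_thetak (f : R -> X -> R) (c : R -> R) (r s : nat)
    (lam delta : R) :
  (0 < r)%N -> (0 < s)%N -> 0 < lam -> (forall x, 0 < f (1 / 2) x) -> c 0 = 1 ->
  (forall (k k' : 'I_s) (i : 'I_(r * s)), integrates
     (fun x => f (thetak delta k i) x * f (thetak delta k' i) x / f (1 / 2) x)
     (c ((thetak delta k i - 1 / 2) * (thetak delta k' i - 1 / 2)))) ->
  chi2 J (unif_mix (@law_dens R X f lam (r * s)) (@thetak R r s delta))
         (law_dens f lam (@theta0 R (r * s)))
  = ((expR (lam * r%:R * (c (delta ^+ 2) - 1)) - 1) / s%:R)%:E.
Proof.
move=> r_gt0 s_gt0 lam_gt0 f_gt0 c0 ratio_c.
rewrite (chi2_unif_mix (U0 := @theta0 R (r * s)) lam_gt0 (fun _ => f_gt0)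
  ratio_c).
by rewrite sum_pairs_thetak // -EFinB addrAC subrr add0r.
Qed.

End ProductIntegrals.

Section Gaussian.
Variable R : realType.

Definition leb_integrates (phi : R -> R) (c : R) : Prop :=
  [/\ forall x, 0 <= phi x, 0 <= c, measurable_fun setT phi &
      leb_int (fun x => (phi x)%:E) = c%:E].

Lemma leb_integrates_ge0 phi c :
  leb_integrates phi c -> (forall x, 0 <= phi x) /\ 0 <= c.
Proof. by case. Qed.

Lemma leb_int_sum (I : finType) (a : I -> R) (phi : I -> R -> R)
    (c : I -> R) :
  (forall j, leb_integrates (phi j) (c j)) -> (forall j, 0 <= a j) ->
  leb_int (fun x => (\sum_j a j * phi j x)%:E) = (\sum_j a j * c j)%:E.
Proof.
move=> phi_c a_ge0; rewrite /leb_int.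
under eq_integral do rewrite -sumEFin.
rewrite ge0_integral_sum // => [|j|j x _]; last 2 first.
- by apply/measurable_EFinP/measurable_funM => //; case: (phi_c j).
- by rewrite lee_fin mulr_ge0 //; case: (phi_c j).
rewrite -sumEFin; apply: eq_bigr => j _.
case: (phi_c j) => phi_ge0 _ phi_mes phi_int.
under eq_integral do rewrite EFinM.
rewrite ge0_integralZl_EFin // => [|x _|]; last 2 first.
- by rewrite lee_fin.
- exact/measurable_EFinP.
by move: phi_int; rewrite /leb_int => ->; rewrite EFinM.
Qed.

Lemma gauss_pdfE (m x : R) : gauss_pdf m x = normal_pdf m 1 x.
Proof.
rewrite /gauss_pdf /normal_pdf oner_eq0 /normal_peak /normal_fun expr1n mul1r.
by rewrite -[pi *+ 2]mulr_natr [pi * _]mulrC; exact: mulrC.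
Qed.

Lemma gauss_pdf_gt0 (m x : R) : 0 < gauss_pdf m x.
Proof. by rewrite divr_gt0 ?expR_gt0 // sqrtr_gt0 mulr_gt0 // pi_gt0. Qed.

Lemma gauss_pdf_ratio (a b c x : R) :
  gauss_pdf a x * gauss_pdf b x / gauss_pdf c x
  = expR ((a - c) * (b - c)) * gauss_pdf (a + b - c) x.
Proof.
rewrite /gauss_pdf [RHS]mulrA.
have exp_neq0 : expR (- ((x - c) ^+ 2) / 2) != 0 by rewrite gt_eqF ?expR_gt0.
have sqrt_neq0 : Num.sqrt (2 * pi) != 0 :> R.
  by rewrite gt_eqF // sqrtr_gt0 mulr_gt0 // pi_gt0.
have -> : expR ((a - c) * (b - c)) * expR (- ((x - (a + b - c)) ^+ 2) / 2)
    = expR (- ((x - a) ^+ 2) / 2) * expR (- ((x - b) ^+ 2) / 2)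
      / expR (- ((x - c) ^+ 2) / 2).
  by rewrite -expRN -!expRD; congr expR; field.
by field; rewrite exp_neq0 sqrt_neq0.
Qed.

Lemma leb_integrates_gauss_ratio (a b c : R) :
  leb_integrates (fun x => gauss_pdf a x * gauss_pdf b x / gauss_pdf c x)
                 (expR ((a - c) * (b - c))).
Proof.
have -> : (fun x => gauss_pdf a x * gauss_pdf b x / gauss_pdf c x)
    = (fun x => expR ((a - c) * (b - c)) * normal_pdf (a + b - c) 1 x).
  by apply/funext => x; rewrite gauss_pdf_ratio gauss_pdfE.
split=> [x|||].
- by rewrite mulr_ge0 ?expR_ge0 ?normal_pdf_ge0.
- exact: expR_ge0.
- by apply: measurable_funM => //; exact: measurable_normal_pdf.
- rewrite /leb_int; under eq_integral do rewrite EFinM.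
  rewrite ge0_integralZl_EFin ?expR_ge0 ?integral_normal_pdf ?mule1 //.
    by move=> x _; rewrite lee_fin normal_pdf_ge0.
  by apply/measurable_EFinP; exact: measurable_normal_pdf.
Qed.

Lemma chi2_gauss_thetak (r s : nat) (lam delta : R) :
  (0 < r)%N -> (0 < s)%N -> 0 < lam ->
  chi2 (@leb_int R) (unif_mix (@G_dens R lam (r * s)) (@thetak R r s delta))
       (G_dens lam (@theta0 R (r * s)))
  = ((expR (lam * r%:R * (expR (delta ^+ 2) - 1)) - 1) / s%:R)%:E.
Proof.
move=> r_gt0 s_gt0 lam_gt0.
apply: (chi2_unif_mix_thetak leb_integrates_ge0 leb_int_sum) => //.
- exact: gauss_pdf_gt0.
- exact: expR0.
- by move=> k k' i; exact: leb_integrates_gauss_ratio.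
Qed.

End Gaussian.

Section Bernoulli.
Variable R : realType.

Definition bool_integrates (phi : bool -> R) (c : R) : Prop :=
  [/\ forall x, 0 <= phi x, 0 <= c & phi false + phi true = c].

Lemma bool_integrates_ge0 phi c :
  bool_integrates phi c -> (forall x, 0 <= phi x) /\ 0 <= c.
Proof. by case. Qed.

Lemma bool_int_sum (I : finType) (a : I -> R) (phi : I -> bool -> R)
    (c : I -> R) :
  (forall j, bool_integrates (phi j) (c j)) -> (forall j, 0 <= a j) ->
  bool_int (fun x => (\sum_j a j * phi j x)%:E) = (\sum_j a j * c j)%:E.
Proof.
move=> phi_c _; rewrite /bool_int -EFinD -big_split /=; congr EFin.
by apply: eq_bigr => j _; rewrite -mulrDr; case: (phi_c j) => _ _ ->.
Qed.

Lemma bool_integrates_bern_ratio (a b p : R) :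
  0 <= a <= 1 -> 0 <= b <= 1 -> 0 < p < 1 ->
  bool_integrates (fun x => bern_pmf a x * bern_pmf b x / bern_pmf p x)
                  (1 + (a - p) * (b - p) / (p * (1 - p))).
Proof.
move=> /andP[a0 a1] /andP[b0 b1] /andP[p0 p1].
have ratio_ge0 x : 0 <= bern_pmf a x * bern_pmf b x / bern_pmf p x.
  by case: x; rewrite /bern_pmf divr_ge0 ?mulr_ge0 ?subr_ge0 // ltW // subr_gt0.
have value : bern_pmf a false * bern_pmf b false / bern_pmf p false
    + bern_pmf a true * bern_pmf b true / bern_pmf p true
    = 1 + (a - p) * (b - p) / (p * (1 - p)).
  have p_neq0 : p != 0 by rewrite gt_eqF.
  have p1_neq0 : 1 - p != 0 by rewrite gt_eqF // subr_gt0.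
  by rewrite /bern_pmf; field; rewrite p_neq0 p1_neq0.
by split=> //; rewrite -value addr_ge0.
Qed.

Lemma chi2_bern_thetak (r s : nat) (lam delta : R) :
  (0 < r)%N -> (0 < s)%N -> 0 < lam -> `|delta| <= 1 / 2 ->
  chi2 (@bool_int R) (unif_mix (@V_dens R lam (r * s)) (@thetak R r s delta))
       (V_dens lam (@theta0 R (r * s)))
  = ((expR (lam * r%:R * (4 * delta ^+ 2)) - 1) / s%:R)%:E.
Proof.
move=> r_gt0 s_gt0 lam_gt0 /[!ler_norml] /andP[delta_lb delta_ub].
have th01 k i : 0 <= @thetak R r s delta k i <= 1.
  by rewrite /thetak; case: ifP => _; apply/andP; split; lra.
have -> : 4 * delta ^+ 2 = 1 + delta ^+ 2 / (1 / 2 * (1 - 1 / 2)) - 1 by field.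
apply: (chi2_unif_mix_thetak bool_integrates_ge0 bool_int_sum
  (c := fun u => 1 + u / (1 / 2 * (1 - 1 / 2)))) => //.
- by case; rewrite /bern_pmf; lra.
- by rewrite mul0r addr0.
- move=> k k' i; apply: bool_integrates_bern_ratio => //; lra.
Qed.

End Bernoulli.

Theorem lemma9 (R : realType) (r s : nat) (lam delta : R)
  (hr : (0 < r)%N) (hs : (0 < s)%N) (hlam : 0 < lam)
  (hd0 : 0 < delta) (hd1 : delta <= 2 / 5) :
  (lam * delta ^+ 2 * r%:R <= 2 / 5 ->
     (chi2 (@leb_int R)
        (unif_mix (@G_dens R lam (r * s)) (@thetak R r s delta))
        (G_dens lam (@theta0 R (r * s)))
      <= (2 * lam * delta ^+ 2 * r%:R / s%:R)%:E)%E) /\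
  (lam * delta ^+ 2 * r%:R <= 1 / 10 ->
     (chi2 (@bool_int R)
        (unif_mix (@V_dens R lam (r * s)) (@thetak R r s delta))
        (V_dens lam (@theta0 R (r * s)))
      <= (8 * lam * delta ^+ 2 * r%:R / s%:R)%:E)%E).
Proof.
have lam_ge0 := ltW hlam; have sqr_ge0 : 0 <= delta ^+ 2 := sqr_ge0 delta.
have s_inv_ge0 : 0 <= s%:R^-1 :> R by rewrite invr_ge0.
split=> small.
- rewrite chi2_gauss_thetak // lee_fin ler_wpM2r //.
  apply: expR_expR_sub1_le => //.
  by rewrite expr2; nra.
- rewrite chi2_bern_thetak // ?lee_fin ?ler_wpM2r //; last first.
    by rewrite ger0_norm ?ltW //; lra.
  exact: expR_mul4_sub1_le.
Qed.
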